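(* For any non-negative integer $n$, \[\sum_{\sigma\in S_n}(-1)^{p_-(\sigma)}\,C\bigl(p_-(\sigma),\lfloor n/2\rfloor-p_-(\sigma)\bigr)=2^{2\lfloor n/2\rfloor},\] and for any even positive integer $n$, \[\sum_{\sigma\in S_n}(-1)^{p_+(\sigma)}\,C\bigl(p_+(\sigma),n/2-p_+(\sigma)\bigr)=0.\]
   Context: $S_n$ is the symmetric group on $\{1,\ldots,n\}$. For $\sigma\in S_n$, with the convention $\sigma(0)=0$, let $p_+(\sigma)=\#\{i\in\{1,\ldots,n-1\}:\sigma(i-1)<\sigma(i)>\sigma(i+1)\}$ and $p_-(\sigma)=\#\{i\in\{2,\ldots,n-1\}:\sigma(i-1)<\sigma(i)>\sigma(i+1)\}$. $C(p,q)=\frac{(2p)!(2q)!}{p!(p+q)!q!}$. *)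

From mathcomp Require Import all_boot all_order all_algebra all_fingroup.
Set Implicit Arguments. Unset Strict Implicit. Unset Printing Implicit Defensive.
Import GRing.Theory Num.Theory.

(* sv s i : the value sigma(i) for sigma in S_n acting on {1,...,n}, where
   s : 'S_n acts on {0,...,n-1}; sigma(i) = s(i-1)+1 for 1 <= i <= n,
   and the convention sigma(0) = 0 (also 0 outside 1..n, never used). *)
Definition sv (n : nat) (s : 'S_n) (i : nat) : nat :=
  if i is j.+1 then
    (if @insub nat (fun k => k < n) 'I_n j is Some k then (s k).+1 else 0)
  else 0.

Definition is_peak (n : nat) (s : 'S_n) (i : nat) : bool :=
  (sv s i.-1 < sv s i) && (sv s i.+1 < sv s i).

Definition p_plus (n : nat) (s : 'S_n) : nat :=
  count (is_peak s) (iota 1 (n - 1)).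

Definition p_minus (n : nat) (s : 'S_n) : nat :=
  count (is_peak s) (iota 2 (n - 2)).

Definition Csc (p q : nat) : rat :=
  (((p.*2)`! * (q.*2)`!)%:R / ((p`! * (p + q)`! * q`!)%:R))%R.

From mathcomp Require Import all_boot all_order all_algebra all_fingroup.
From mathcomp Require Import zify ring.
Import GRing.Theory Num.Theory.

Set Implicit Arguments.
Unset Strict Implicit.
Unset Printing Implicit Defensive.

(* Build the words of the permutations of {0, ..., n} by inserting the letter n
   into every slot of the words of the permutations of {0, ..., n-1}.  If the
   word has k interior peaks, the new maximum leaves k peaks in the 2k + 2
   slots formed by the two ends and the neighbours of the old peaks, and adds
   one peak in each of the remaining slots.  With the weight
   w_h(k) = (-1)^k C(k, h-k), the two identities
     C(k+1, m) (2m+1) = C(k, m+1) (2k+1)  and  C(k+1, m) + C(k, m+1) = 4 C(k, m)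
   show that the sum of w_(n/2)(p_-) over the words of length n is multiplied
   by 4 when n goes from 2h+1 to 2h+2 and is unchanged from 2h+2 to 2h+3.  For p_+
   the leading 0 forbids the front slot, and the same identities make the
   contribution of each word of length 2h+1 vanish. *)

Fixpoint peaks (w : seq nat) : nat :=
  if w is a :: (b :: c :: _) as t then ((a < b) && (c < b)) + peaks t else 0.

Definition peak_head (a : nat) (t : seq nat) : bool :=
  if t is b :: c :: _ then (a < b) && (c < b) else false.

Lemma peaks_cons a t : peaks (a :: t) = peak_head a t + peaks t.
Proof. by case: t => [|b [|c u]]. Qed.

Lemma peak_head_adjacent a b u : peak_head a (b :: u) && peak_head b u = false.
Proof.
case: u => [|c [|d u]] //=; first by rewrite andbF.
apply/negbTE/negP => /andP[/andP[_ lt_cb] /andP[lt_bc _]].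
by move: (ltn_trans lt_cb lt_bc); rewrite ltnn.
Qed.

Lemma peaks_double_le a t : (peaks (a :: t)).*2 <= size t.
Proof.
elim: t {-2}t (leqnn (size t)) a => [|x t IH] [|b [|c u]] // le_u a.
rewrite peaks_cons; have := peak_head_adjacent a b (c :: u).
case: (peak_head a _) => [no_peak_b | _]; last exact/leqW/IH.
move: no_peak_b; rewrite andTb add1n peaks_cons => ->; rewrite doubleS !ltnS.
by apply: IH; rewrite -ltnS ltnW.
Qed.

Lemma peaks_map_mono f w : {mono f : x y / x < y} -> peaks (map f w) = peaks w.
Proof.
move=> f_mono; elim: w => [|a t IH] //; rewrite [map f _]/=.
by rewrite !peaks_cons IH; case: t {IH} => [|b [|c u]] //=; rewrite !f_mono.
Qed.

Definition insert T (j : nat) (x : T) (s : seq T) := take j s ++ x :: drop j s.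

Lemma insert0 T (x : T) s : insert 0 x s = x :: s.
Proof. by rewrite /insert take0 drop0. Qed.

Lemma insert_cons T j (x y : T) s : insert j.+1 x (y :: s) = y :: insert j x s.
Proof. by []. Qed.

Lemma perm_insert (T : eqType) j (x : T) s : perm_eq (insert j x s) (x :: s).
Proof. by rewrite /insert -cat1s perm_catCA /= perm_cons cat_take_drop. Qed.

Section InsertMax.

Variables (R : comRingType) (M : nat).
Local Open Scope ring_scope.

Lemma peak_head_max t : all (fun x => x < M)%N t -> peak_head M t = false.
Proof. by case: t => [|x [|y t]] //= /andP[lt_xM _]; rewrite ltnNge ltnW. Qed.

Lemma peaks_max_head t : all (fun x => x < M)%N t -> peaks (M :: t) = peaks t.
Proof. by move=> t_lt; rewrite peaks_cons peak_head_max. Qed.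

Lemma peaks_max_second a t : (a < M)%N -> all (fun x => x < M)%N t ->
  peaks (a :: M :: t) = ((t != [::]) + peaks t)%N.
Proof.
move=> lt_aM t_lt; rewrite peaks_cons peaks_max_head //.
by case: t t_lt => [|x t] //= /andP[-> _]; rewrite lt_aM.
Qed.

Lemma peak_head_insert a b j u : (b < M)%N ->
  peak_head a (b :: insert j.+1 M u) = peak_head a (b :: u).
Proof. by case: u => [|x u] lt_bM //=; rewrite (leq_gtF (ltnW lt_bM)) andbF. Qed.

Lemma sum_peaks_insert_max (G : nat -> R) a t :
  (a < M)%N -> all (fun x => x < M)%N t ->
  let k := peaks (a :: t) in
  \sum_(0 <= j < (size t).+1) G (peaks (a :: insert j M t)) =
  G k * (k.*2.+1)%:R + G k.+1 * (size t - k.*2)%:R.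
Proof.
elim: t a G => [|b u IH] a G lt_aM; first by rewrite big_nat1 insert0 /= mulr1 mulr0 addr0.
case/andP=> lt_bM u_lt k; rewrite big_nat_recl // big_nat_recl // !insert0 insert_cons insert0.
have shift_a j : peaks (a :: b :: insert j.+1 M u) =
                 (peak_head a (b :: u) + peaks (b :: insert j.+1 M u))%N.
  by rewrite peaks_cons peak_head_insert.
under eq_bigr do rewrite insert_cons shift_a.
(* Shifted by the peak status of [b], IH accounts for every slot after [b],
   except that in the first one [b] is followed by [M] and stops being a peak. *)
have := IH b (fun i => G (peak_head a (b :: u) + i)%N) lt_bM u_lt.
rewrite big_nat_recl // insert0 peaks_max_second // => /(canRL (addKr _)) ->.
have -> : peaks [:: a, M, b & u] = (peaks (b :: u)).+1 by rewrite peaks_max_second //= lt_bM.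
have -> : peaks [:: a, b, M & u] = ((u != [::]) + peaks u)%N.
  by rewrite peaks_cons [peak_head _ _]/= (leq_gtF (ltnW lt_bM)) andbF peaks_max_second.
have bound_a := peaks_double_le a (b :: u); have bound_b := peaks_double_le b u.
have not_both := peak_head_adjacent a b u.
rewrite /k; rewrite peaks_cons in bound_a *; rewrite peaks_cons in bound_a bound_b *.
case: (eqVneq u [::]) => [-> | nz_u]; rewrite [size _]/=.
  by rewrite /= !addn0 sub0n subn0 add0n; ring.
move: (peak_head a _) (peak_head b u) (peaks u) not_both bound_a bound_b.
move=> [] [] // p _ /=; rewrite ?add0n ?add1n ?addSn -!muln2 => bound_a bound_b.
all: by rewrite !natrB; [ring | lia..].
Qed.

Lemma sum_peaks_insert_max_all (G : nat -> R) a t :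
  (a < M)%N -> all (fun x => x < M)%N t ->
  let k := peaks (a :: t) in
  \sum_(0 <= j < (size t).+2) G (peaks (insert j M (a :: t))) =
  G k * (k.*2.+2)%:R + G k.+1 * (size t - k.*2)%:R.
Proof.
move=> lt_aM t_lt k; rewrite big_nat_recl // insert0 peaks_max_head; last exact/andP.
under eq_bigr do rewrite insert_cons.
by rewrite sum_peaks_insert_max // -/k mulrS; ring.
Qed.

End InsertMax.

Fixpoint perms (n : nat) : seq (seq nat) :=
  if n is m.+1 then [seq insert j m l | l <- perms m, j <- index_iota 0 n]
  else [:: [::]].

Lemma permsS n :
  perms n.+1 = [seq insert j n l | l <- perms n, j <- index_iota 0 n.+1].
Proof. by []. Qed.

Lemma perm_iotaS n : perm_eq (iota 0 n.+1) (n :: iota 0 n).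
Proof. by rewrite -addn1 iotaD cats1 perm_rcons. Qed.

Lemma mem_perms n l : (l \in perms n) = perm_eq l (iota 0 n).
Proof.
elim: n l => [|n IH] l; first by apply/idP/idP => [/[!inE]/eqP -> | /perm_nilP ->].
rewrite permsS; apply/allpairsPdep/idP => [[l' [j [l'_in _ ->]]] | l_perm].
  apply: perm_trans (perm_insert j n l') _.
  by rewrite (permPr (perm_iotaS n)) perm_cons -IH.
have n_in : n \in l by rewrite (perm_mem l_perm) mem_iota add0n ltnSn.
pose i := index n l; pose l' := take i l ++ drop i.+1 l.
have def_l : l = insert i n l'.
  have size_take_i : size (take i l) = i by rewrite size_take index_mem n_in.
  rewrite /insert take_size_cat // drop_size_cat // -{1}(nth_index 0 n_in).
  by rewrite -drop_nth ?index_mem // cat_take_drop.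
exists l', i; split=> //.
  rewrite IH -(perm_cons n) -(permPr (perm_iotaS n)).
  by rewrite -(permPl (perm_insert i n l')) -def_l.
by rewrite mem_index_iota -[n.+1](size_iota 0) -(perm_size l_perm) index_mem.
Qed.

Lemma size_perms n : size (perms n) = n`!.
Proof.
elim: n => [|n IH] //; rewrite permsS size_allpairs_dep factS -IH mulnC.
by elim: (perms n) => [|l s] //= ->; rewrite size_iota mulSn.
Qed.

Definition perm_word n (s : 'S_n) : seq nat := [seq val (s i) | i <- enum 'I_n].

Lemma size_perm_word n (s : 'S_n) : size (perm_word s) = n.
Proof. by rewrite size_map -cardT card_ord. Qed.

Lemma nth_perm_word n (s : 'S_n) (i : 'I_n) : nth 0 (perm_word s) i = s i.
Proof. by rewrite (nth_map i) ?nth_ord_enum // -cardT card_ord. Qed.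

Lemma perm_word_inj n : injective (@perm_word n).
Proof.
move=> s1 s2 eq_w; apply/permP => i; apply: val_inj.
by rewrite /= -!nth_perm_word eq_w.
Qed.

Lemma perm_word_iota n (s : 'S_n) : perm_eq (perm_word s) (iota 0 n).
Proof.
have -> : perm_word s = map val (map s (enum 'I_n)) by rewrite -map_comp.
rewrite -val_enum_ord; apply: perm_map.
apply: uniq_perm; rewrite ?(map_inj_uniq (@perm_inj _ s)) ?enum_uniq //.
by move=> i; rewrite mem_enum; apply/mapP; exists (s^-1 i)%g; rewrite ?mem_enum ?permKV.
Qed.

Lemma perm_eq_perm_words n : perm_eq (map (@perm_word n) (index_enum 'S_n)) (perms n).
Proof.
have uniq_words : uniq (map (@perm_word n) (index_enum 'S_n)).
  by rewrite map_inj_uniq ?index_enum_uniq //; exact: perm_word_inj.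
have sub_perms : {subset map (@perm_word n) (index_enum 'S_n) <= perms n}.
  by move=> _ /mapP[s _ ->]; rewrite mem_perms perm_word_iota.
have size_le : size (perms n) <= size (map (@perm_word n) (index_enum 'S_n)).
  by rewrite size_map [index_enum _]unlock -enumT -cardT card_Sn size_perms.
have [_ eq_mem] := uniq_min_size uniq_words sub_perms size_le.
by rewrite uniq_perm ?(leq_size_uniq uniq_words sub_perms size_le).
Qed.

Lemma sum_perm_word (R : nmodType) n (F : seq nat -> R) :
  (\sum_(s : 'S_n) F (perm_word s) = \sum_(l <- perms n) F l)%R.
Proof. by rewrite -(perm_big _ (perm_eq_perm_words n)) big_map. Qed.

Definition peak_at (w : seq nat) (i : nat) : bool :=
  (nth 0 w i.-1 < nth 0 w i) && (nth 0 w i.+1 < nth 0 w i).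

Lemma count_peak_at_cons a w m :
  count (peak_at (a :: w)) (iota 2 m) = count (peak_at w) (iota 1 m).
Proof.
rewrite -[2]/(1 + 1) iotaDl count_map; apply: eq_in_count => i.
by rewrite mem_iota; case: i.
Qed.

Lemma peaks_count w : peaks w = count (peak_at w) (iota 1 (size w - 2)).
Proof.
elim: w => [|a t IH] //; rewrite peaks_cons IH.
case: t IH => [|b [|c u]] // _.
by rewrite /= subn2 /= count_peak_at_cons.
Qed.

(* [rooted (perm_word s)] is the word sigma(0) sigma(1) ... sigma(n) of the
   statement, with sigma(0) = 0. *)
Definition rooted (w : seq nat) : seq nat := 0 :: map succn w.

Lemma sv_nth n (s : 'S_n) i : sv s i = nth 0 (rooted (perm_word s)) i.
Proof.
case: i => [|j] //=; rewrite /sv; case: insubP => [k _ <- | ].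
  by rewrite (nth_map 0) -?(nth_perm_word s k) // size_perm_word ltn_ord.
by move=> /= lt_jn; rewrite nth_default // size_map size_perm_word leqNgt.
Qed.

Lemma p_plus_peaks n (s : 'S_n) : p_plus s = peaks (rooted (perm_word s)).
Proof.
rewrite /p_plus peaks_count /= size_map size_perm_word subSS subn1.
by apply: eq_count => i; rewrite /is_peak /peak_at !sv_nth.
Qed.

Lemma p_minus_peaks n (s : 'S_n) : p_minus s = peaks (perm_word s).
Proof.
rewrite -(@peaks_map_mono succn) // peaks_count size_map size_perm_word.
rewrite -(count_peak_at_cons 0) /p_minus.
by apply: eq_count => i; rewrite /is_peak /peak_at !sv_nth.
Qed.

Lemma all_lt_perms n l : l \in perms n -> all (fun x => x < n) l.
Proof. by rewrite mem_perms => /perm_mem eq_l; apply/allP => x; rewrite eq_l mem_iota. Qed.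

Lemma size_perms_mem n l : l \in perms n -> size l = n.
Proof. by rewrite mem_perms => /perm_size ->; rewrite size_iota. Qed.

Lemma peaks_perms_double_le n l : l \in perms n.+1 -> (peaks l).*2 <= n.
Proof. by case: l => [|a t] /size_perms_mem // [<-]; apply: peaks_double_le. Qed.

Lemma peaks_rooted_double_le n l : l \in perms n -> (peaks (rooted l)).*2 <= n.
Proof. by move/size_perms_mem <-; rewrite -(size_map succn) peaks_double_le. Qed.

Section PeakSums.

Variable R : comRingType.
Local Open Scope ring_scope.

Lemma sum_perms_peaks_succ (G : nat -> R) n :
  \sum_(l <- perms n.+2) G (peaks l) =
  \sum_(l <- perms n.+1)
    (G (peaks l) * ((peaks l).*2.+2)%:R + G (peaks l).+1 * (n - (peaks l).*2)%:R).
Proof.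
rewrite permsS big_allpairs_dep; apply: eq_big_seq => l l_in.
have := all_lt_perms l_in; have := size_perms_mem l_in.
case: l {l_in} => [|a t] // [<-] /andP[lt_a t_lt].
exact: sum_peaks_insert_max_all.
Qed.

Lemma sum_perms_peaks_rooted (G : nat -> R) n :
  \sum_(l <- perms n.+1) G (peaks (rooted l)) =
  \sum_(l <- perms n)
    (G (peaks (rooted l)) * ((peaks (rooted l)).*2.+1)%:R
     + G (peaks (rooted l)).+1 * (n - (peaks (rooted l)).*2)%:R).
Proof.
rewrite permsS big_allpairs_dep; apply: eq_big_seq => l l_in.
have rooted_insert j : rooted (insert j n l) = 0 :: insert j n.+1 (map succn l).
  by rewrite /rooted /insert map_cat map_take /= map_drop.
under eq_bigr do rewrite rooted_insert.
rewrite -[in index_iota _ _](size_perms_mem l_in) -(size_map succn) sum_peaks_insert_max //.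
  by rewrite size_map (size_perms_mem l_in).
by rewrite all_map; apply: sub_all (all_lt_perms l_in) => x /=.
Qed.

End PeakSums.

Local Open Scope ring_scope.

Lemma natr_fact_neq0 (R : numDomainType) n : (n`!)%:R != 0 :> R.
Proof. by rewrite pnatr_eq0 -lt0n fact_gt0. Qed.

Lemma Csc_shift k m : Csc k.+1 m * (m.*2.+1)%:R = Csc k m.+1 * (k.*2.+1)%:R.
Proof.
rewrite /Csc addSn addnS !doubleS !factS -!muln2 !natrM.
by field; rewrite -!natrD !nat1r !natr_fact_neq0 !pnatr_eq0.
Qed.

Lemma Csc_super_catalan k m : Csc k.+1 m + Csc k m.+1 = 4 * Csc k m.
Proof.
rewrite /Csc addSn addnS !doubleS !factS -!muln2 !natrM.
by field; rewrite -!natrD !nat1r !natr_fact_neq0 !pnatr_eq0.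
Qed.

Definition peak_weight (h k : nat) : rat := (-1) ^+ k * Csc k (h - k).

Lemma peak_weight_rooted_step h k : (k <= h)%N ->
  peak_weight h.+1 k * (k.*2.+1)%:R + peak_weight h.+1 k.+1 * (h.*2.+1 - k.*2)%:R = 0.
Proof.
move/subnKC <-; move: (h - k)%N => m.
rewrite /peak_weight subSS doubleD -!addnS !addKn.
by rewrite exprS mulN1r !mulNr -!(mulrA ((-1) ^+ k)) Csc_shift subrr.
Qed.

Lemma peak_weight_diff h k : (k <= h)%N ->
  peak_weight h.+1 k - peak_weight h.+1 k.+1 = 4 * peak_weight h k.
Proof.
move/subnKC <-; move: (h - k)%N => m.
rewrite /peak_weight subSS -!addnS !addKn.
by rewrite exprS mulN1r mulNr opprK -mulrDr addrC Csc_super_catalan mulrCA.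
Qed.

Lemma peak_weight_odd_step h k : (k <= h)%N ->
  peak_weight h.+1 k * (k.*2.+2)%:R + peak_weight h.+1 k.+1 * (h.*2.+1 - k.*2)%:R =
  peak_weight h.+1 k.
Proof. by move=> le_kh; rewrite -[RHS]addr0 -(peak_weight_rooted_step le_kh); ring. Qed.

Lemma peak_weight_even_step h k : (k <= h)%N ->
  peak_weight h.+1 k * (k.*2.+2)%:R + peak_weight h.+1 k.+1 * (h.*2 - k.*2)%:R =
  4 * peak_weight h k.
Proof.
move=> le_kh; rewrite -peak_weight_diff // -[LHS]subr0.
by rewrite -(peak_weight_rooted_step le_kh) subSn ?leq_double //; ring.
Qed.

Lemma sum_peak_weight_even h :
  \sum_(l <- perms h.*2.+2) peak_weight h.+1 (peaks l) =
  4 * \sum_(l <- perms h.*2.+1) peak_weight h (peaks l).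
Proof.
rewrite sum_perms_peaks_succ mulr_sumr; apply: eq_big_seq => l /peaks_perms_double_le.
by rewrite leq_double => /peak_weight_even_step.
Qed.

Lemma sum_peak_weight_odd h :
  \sum_(l <- perms h.*2.+3) peak_weight h.+1 (peaks l) =
  \sum_(l <- perms h.*2.+2) peak_weight h.+1 (peaks l).
Proof.
rewrite sum_perms_peaks_succ; apply: eq_big_seq => l /peaks_perms_double_le.
by rewrite -ltnS -doubleS ltn_double ltnS => /peak_weight_odd_step.
Qed.

Lemma sum_peak_weight n :
  \sum_(l <- perms n) peak_weight n./2 (peaks l) = (4 ^ n./2)%:R.
Proof.
have sum_odd h : \sum_(l <- perms h.*2.+1) peak_weight h (peaks l) = (4 ^ h)%:R.
  elim: h => [|h IH]; first by rewrite big_seq1 /peak_weight /Csc mul1r divr1.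
  by rewrite doubleS sum_peak_weight_odd sum_peak_weight_even IH expnS natrM.
rewrite -[n in perms n]odd_double_half; case: (odd n); first exact: sum_odd.
case: n./2 => [|h]; first by rewrite big_seq1 /peak_weight /Csc mul1r divr1.
by rewrite doubleS sum_peak_weight_even sum_odd expnS natrM.
Qed.

Lemma sum_peak_weight_rooted h :
  \sum_(l <- perms h.*2.+2) peak_weight h.+1 (peaks (rooted l)) = 0.
Proof.
rewrite sum_perms_peaks_rooted big1_seq // => l /andP[_ /peaks_rooted_double_le].
by rewrite -ltnS -doubleS ltn_double ltnS => /peak_weight_rooted_step.
Qed.

Theorem corollary7p2 :
  (forall n : nat,
      \sum_(s : 'S_n) (-1) ^+ (p_minus s) * Csc (p_minus s) (n./2 - p_minus s)%N
      = (2 ^ (2 * n./2))%N%:R :> rat)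
  /\
  (forall n : nat, (0 < n)%N -> ~~ odd n ->
      \sum_(s : 'S_n) (-1) ^+ (p_plus s) * Csc (p_plus s) (n./2 - p_plus s)%N
      = 0 :> rat).
Proof.
split=> [n | n n_gt0 n_even].
  under eq_bigr do rewrite p_minus_peaks.
  by rewrite (sum_perm_word n (fun l => peak_weight n./2 (peaks l))) sum_peak_weight expnM.
under eq_bigr do rewrite p_plus_peaks.
rewrite (sum_perm_word n (fun l => peak_weight n./2 (peaks (rooted l)))).
have := odd_double_half n; rewrite (negbTE n_even) add0n => def_n.
rewrite -[n in perms n]def_n; rewrite -def_n in n_gt0.
by case: n./2 n_gt0 => [|h] // _; rewrite doubleS sum_peak_weight_rooted.
Qed.
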